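(* Let $V$ be a real vector space, let $R:V\to\mathbb{R}\cup\{+\infty\}$ and $f:\mathbb{R}^m\to\mathbb{R}\cup\{+\infty\}$ be convex functions, and let $\Phi:V\to\mathbb{R}^m$ be linear and surjective. Let $S$ be the set of minimizers of $\min_{u\in V} R(u)+f(\Phi u)$. Assume that $p\in S$, that $R(p)+f(\Phi p)<+\infty$, and that the level set $\mathrm{lev}_R(p)=\{u\in V: R(u)\le R(p)\}$ is linearly closed and contains no line. Let $\ell$ be the dimension of the minimal face $F(\Phi p,\mathrm{lev}_f(\Phi p))$ of $\Phi p$ in $\mathrm{lev}_f(\Phi p)=\{w\in\mathbb{R}^m: f(w)\le f(\Phi p)\}$. If $p$ belongs to a face of $S$ with dimension $j<+\infty$, then $p$ belongs to a face of $\mathrm{lev}_R(p)$ with dimension at most $k$, where $$k=\begin{cases} m-\ell+j-1 & \text{if } R(p)>\inf_V R \text{ or } f(\Phi p)>\inf_{\mathbb{R}^m} f,\\ m-\ell+j & \text{otherwise.}\end{cases}$$ If, moreover, $p$ satisfies the double obliqueness condition, then $k$ can be replaced by $m-\ell+j-2$.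
   Context: Convex-geometric notions (for a convex set $C$ in a real vector space $X$): for $x\neq y$, the open segment is $]x,y[=\{tx+(1-t)y: 0<t<1\}$. A face of $C$ is a convex subset $F\subseteq C$ such that every open segment contained in $C$ which intersects $F$ is contained in $F$. The dimension of a face is the dimension of its affine hull. For $x\in C$, the minimal (elementary) face $F(x,C)$ is the intersection of all faces of $C$ containing $x$ (it is itself a face). $C$ is linearly closed if its intersection with every line is a closed subset of that line; $C$ contains no line if there are no $a\in X$, $v\neq0$ with $a+\mathbb{R}v\subseteq C$. Double obliqueness condition: let $M=R(p)+f(\Phi p)$ be the minimal value, $\mathrm{epi}(R)=\{(u,r)\in V\times\mathbb{R}: R(u)\le r\}$ and $\mathrm{hypo}(M-f)=\{(w,r)\in\mathbb{R}^m\times\mathbb{R}: M-f(w)\ge r\}$. For a convex set $C\subseteq X\times\mathbb{R}$ and $(x,r)\in C$, the face $F((x,r),C)$ is called horizontal if its affine hull is contained in $X\times\{r\}$ and oblique otherwise. The point $p$ satisfies the double obliqueness condition if both $F((p,R(p)),\mathrm{epi}(R))$ and $F((\Phi p, M-f(\Phi p)),\mathrm{hypo}(M-f))$ are oblique (note $M-f(\Phi p)=R(p)$). *)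

From Stdlib Require Import Reals Lra List ZArith FunctionalExtensionality.
Open Scope R_scope.

Record RVS := mkRVS {
  vcar :> Type;
  vadd : vcar -> vcar -> vcar;
  vscal : R -> vcar -> vcar;
  vzero : vcar;
  vaddA : forall x y z, vadd x (vadd y z) = vadd (vadd x y) z;
  vaddC : forall x y, vadd x y = vadd y x;
  vadd0 : forall x, vadd vzero x = x;
  vaddN : forall x, vadd x (vscal (-1) x) = vzero;
  vscal1 : forall x, vscal 1 x = x;
  vscalA : forall a b x, vscal a (vscal b x) = vscal (a * b) x;
  vscalDr : forall a x y, vscal a (vadd x y) = vadd (vscal a x) (vscal a y);
  vscalDl : forall a b x, vscal (a + b) x = vadd (vscal a x) (vscal b x)
}.
Arguments vadd {r}.
Arguments vscal {r}.
Arguments vzero {r}.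

Definition vsub {V : RVS} (x y : V) : V := vadd x (vscal (-1) y).

Definition R_RVS : RVS.
Proof.
  refine (mkRVS R Rplus Rmult 0 _ _ _ _ _ _ _ _); intros; ring.
Defined.

Definition Rn (m : nat) : RVS.
Proof.
  refine (mkRVS ({i : nat | (i < m)%nat} -> R)
            (fun x y i => x i + y i) (fun a x i => a * x i) (fun _ => 0)
            _ _ _ _ _ _ _ _);
  intros; apply functional_extensionality; intro; ring.
Defined.

Definition prodVS (V W : RVS) : RVS.
Proof.
  refine (mkRVS (V * W)%type
            (fun x y => (vadd (fst x) (fst y), vadd (snd x) (snd y)))
            (fun a x => (vscal a (fst x), vscal a (snd x)))
            (vzero, vzero) _ _ _ _ _ _ _ _); intros; simpl.
  - f_equal; apply vaddA.
  - f_equal; apply vaddC.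
  - destruct x; simpl; f_equal; apply vadd0.
  - f_equal; apply vaddN.
  - destruct x; simpl; f_equal; apply vscal1.
  - f_equal; apply vscalA.
  - f_equal; apply vscalDr.
  - f_equal; apply vscalDl.
Defined.

Fixpoint lin_comb {V : RVS} (c : list R) (l : list V) : V :=
  match c, l with
  | a :: c', x :: l' => vadd (vscal a x) (lin_comb c' l')
  | _, _ => vzero
  end.

Definition lin_indep {V : RVS} (l : list V) : Prop :=
  forall c : list R, length c = length l -> lin_comb c l = vzero ->
    Forall (fun a => a = 0) c.

Definition is_linear {V W : RVS} (T : V -> W) : Prop :=
  (forall x y, T (vadd x y) = vadd (T x) (T y)) /\
  (forall a x, T (vscal a x) = vscal a (T x)).

Definition aff {V : RVS} (A : V -> Prop) (x : V) : Prop :=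
  exists (pts : list V) (c : list R),
    length c = length pts /\ Forall A pts /\ fold_right Rplus 0 c = 1 /\
    x = lin_comb c pts.

Definition aff_dir {V : RVS} (A : V -> Prop) (v : V) : Prop :=
  exists x y, aff A x /\ aff A y /\ v = vsub x y.

Definition affdim {V : RVS} (A : V -> Prop) (d : nat) : Prop :=
  (exists a, A a) /\
  (exists l : list V, length l = d /\ lin_indep l /\ Forall (aff_dir A) l) /\
  (forall l : list V, lin_indep l -> Forall (aff_dir A) l -> (length l <= d)%nat).

Definition seg {V : RVS} (x y : V) (t : R) : V :=
  vadd (vscal t x) (vscal (1 - t) y).

Definition convex_set {V : RVS} (C : V -> Prop) : Prop :=
  forall x y t, C x -> C y -> 0 <= t <= 1 -> C (seg x y t).

Definition face {V : RVS} (F C : V -> Prop) : Prop :=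
  convex_set F /\ (forall z, F z -> C z) /\
  forall x y : V, x <> y ->
    (forall t, 0 < t < 1 -> C (seg x y t)) ->
    (exists t, 0 < t < 1 /\ F (seg x y t)) ->
    (forall t, 0 < t < 1 -> F (seg x y t)).

Definition minface {V : RVS} (x : V) (C : V -> Prop) (y : V) : Prop :=
  forall F, face F C -> F x -> F y.

Definition linearly_closed {V : RVS} (C : V -> Prop) : Prop :=
  forall (a v : V), closed_set (fun t : R => C (vadd a (vscal t v))).

Definition contains_no_line {V : RVS} (C : V -> Prop) : Prop :=
  ~ exists (a v : V), v <> vzero /\ forall t : R, C (vadd a (vscal t v)).

Inductive ereal := Fin (x : R) | PInf.

Definition ele (a b : ereal) : Prop :=
  match a, b with
  | Fin x, Fin y => x <= y
  | _, PInf => True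
  | PInf, Fin _ => False
  end.

Definition elt (a b : ereal) : Prop :=
  match a, b with
  | Fin x, Fin y => x < y
  | Fin _, PInf => True
  | PInf, _ => False
  end.

Definition eplus (a b : ereal) : ereal :=
  match a, b with
  | Fin x, Fin y => Fin (x + y)
  | _, _ => PInf
  end.

Definition real_of (a : ereal) : R :=
  match a with Fin x => x | PInf => 0 end.

Definition convex_fun {V : RVS} (g : V -> ereal) : Prop :=
  forall (x y : V) (rx ry t : R), 0 <= t <= 1 ->
    ele (g x) (Fin rx) -> ele (g y) (Fin ry) ->
    ele (g (seg x y t)) (Fin (t * rx + (1 - t) * ry)).

(* inf_V g < g x  (as a strict inequality with the infimum) *)
Definition above_inf {V : RVS} (g : V -> ereal) (x : V) : Prop :=
  exists y, elt (g y) (g x).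

Definition lev {V : RVS} (g : V -> ereal) (x : V) (u : V) : Prop :=
  ele (g u) (g x).

Definition argmin_set {V W : RVS} (Rg : V -> ereal) (f : W -> ereal)
  (Phi : V -> W) (u : V) : Prop :=
  forall v, ele (eplus (Rg u) (f (Phi u))) (eplus (Rg v) (f (Phi v))).

Definition epi {V : RVS} (g : V -> ereal) (z : prodVS V R_RVS) : Prop :=
  ele (g (fst z)) (Fin (snd z)).

(* hypo(M - f) = {(w,r) | M - f(w) >= r}, with M - (+oo) = -oo *)
Definition hypo_shift {W : RVS} (M : R) (f : W -> ereal)
  (z : prodVS W R_RVS) : Prop :=
  match f (fst z) with
  | Fin y => snd z <= M - y
  | PInf => False
  end.

Definition oblique_face {X : RVS} (z : prodVS X R_RVS)
  (C : prodVS X R_RVS -> Prop) : Prop :=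
  ~ (forall w, aff (minface z C) w -> snd w = snd z).

Definition double_oblique {V : RVS} {m : nat} (Rg : V -> ereal)
  (f : Rn m -> ereal) (Phi : V -> Rn m) (p : V) : Prop :=
  let M := real_of (eplus (Rg p) (f (Phi p))) in
  oblique_face ((p, real_of (Rg p)) : prodVS V R_RVS) (epi Rg) /\
  oblique_face ((Phi p, M - real_of (f (Phi p))) : prodVS (Rn m) R_RVS)
               (hypo_shift M f).

Definition in_face_dim_le {V : RVS} (C : V -> Prop) (p : V) (k : Z) : Prop :=
  exists G : V -> Prop, face G C /\ G p /\
    exists d : nat, affdim G d /\ (Z.of_nat d <= k)%Z.

(* Let D be the space of directions along which p can move both ways inside
   lev_R(p), and L the analogous space at Phi p inside lev_f(Phi p): D is the
   direction space of the minimal face of p in lev_R(p), and L contains the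
   l-dimensional direction space of F(Phi p, lev_f(Phi p)). Split a basis of D
   into vectors g with Phi g in L and vectors whose images are independent
   modulo L. Moving p along such a g raises neither R nor f o Phi, so g is a
   two-sided direction of S and at most j of them are independent; the others,
   together with l independent vectors of L, form an independent family in
   R^m. Hence dim D + l <= m + j.
   If some point has a lower value of R (or of f), the corresponding
   displacement in R^m lies outside Phi(D) + L, since otherwise a convex
   combination would beat the minimum. Under double obliqueness, the slopes of
   R and f along their oblique faces give two such extra dimensions, unless
   they combine into a direction of S that is not in D. *)

From Stdlib Require Import Reals ZArith List Lra Lia Classical FunctionalExtensionality.
Open Scope R_scope.

(** * Vector identities *)

Section VectorAlgebra.
Context {V : RVS}.
Implicit Types x y z : V.

Lemma vadd0r x : vadd x vzero = x.
Proof. rewrite vaddC; apply vadd0. Qed.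

Lemma vscal0l x : vscal 0 x = vzero.
Proof.
  assert (H : vscal 0 x = vadd (vscal 0 x) (vscal 0 x)) by (rewrite <- vscalDl; f_equal; ring).
  assert (H2 := vaddN _ (vscal 0 x)).
  rewrite H in H2 at 1. rewrite <- vaddA, vaddN, vadd0r in H2. exact H2.
Qed.

Lemma vscal0r r : vscal r (@vzero V) = vzero.
Proof. rewrite <- (vscal0l vzero), vscalA, Rmult_0_r; reflexivity. Qed.

Lemma vaddACA (a b c d : V) : vadd (vadd a b) (vadd c d) = vadd (vadd a c) (vadd b d).
Proof. rewrite <- !vaddA; f_equal. rewrite !vaddA; f_equal; apply vaddC. Qed.

Fixpoint lin_comb_fun (c : nat -> R) (env : list V) : V :=
  match env with
  | nil => vzero
  | x :: e => vadd (vscal (c O) x) (lin_comb_fun (fun i => c (S i)) e)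
  end.

Lemma lin_comb_fun_ext c1 c2 env :
  (forall i, (i < length env)%nat -> c1 i = c2 i) -> lin_comb_fun c1 env = lin_comb_fun c2 env.
Proof.
  revert c1 c2; induction env; intros c1 c2 H; simpl in *; auto.
  rewrite H by lia; f_equal; apply IHenv; intros; apply H; lia.
Qed.

Lemma lin_comb_fun_add c1 c2 env : lin_comb_fun (fun i => c1 i + c2 i) env = vadd (lin_comb_fun c1 env) (lin_comb_fun c2 env).
Proof.
  revert c1 c2; induction env; intros; simpl; [now rewrite vadd0|].
  rewrite vscalDl, IHenv. apply vaddACA.
Qed.

Lemma lin_comb_fun_scal r c env : lin_comb_fun (fun i => r * c i) env = vscal r (lin_comb_fun c env).
Proof.
  revert c; induction env; intros; simpl; [now rewrite vscal0r|].
  rewrite vscalDr, IHenv, vscalA; auto.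
Qed.

Lemma lin_comb_fun_zero env : lin_comb_fun (fun _ => 0) env = vzero.
Proof. induction env; simpl; auto. rewrite IHenv, vscal0l, vadd0; auto. Qed.

Lemma lin_comb_fun_unit env n : lin_comb_fun (fun i => if Nat.eqb i n then 1 else 0) env = nth n env vzero.
Proof.
  revert n; induction env; intros n; simpl; [now destruct n|].
  destruct n; simpl.
  - rewrite lin_comb_fun_zero, vscal1, vadd0r; auto.
  - rewrite vscal0l, vadd0. apply IHenv.
Qed.
End VectorAlgebra.

(* A reflexive decision procedure for identities of vector expressions: both
   sides are reified over a list of atoms and normalised to coefficient
   functions, whose equality is left to [ring]/[field] atom by atom. *)
Inductive vterm := VAtom (n : nat) | VAdd (a b : vterm) | VScal (r : R) (a : vterm)
                 | VZero | VSub (a b : vterm).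

Fixpoint veval {V : RVS} (env : list V) (e : vterm) : V :=
  match e with
  | VAtom n => nth n env vzero
  | VAdd a b => vadd (veval env a) (veval env b)
  | VScal r a => vscal r (veval env a)
  | VZero => vzero
  | VSub a b => vsub (veval env a) (veval env b)
  end.

Fixpoint vcoeff (e : vterm) : nat -> R :=
  match e with
  | VAtom n => fun i => if Nat.eqb i n then 1 else 0
  | VAdd a b => fun i => vcoeff a i + vcoeff b i
  | VScal r a => fun i => r * vcoeff a i
  | VZero => fun _ => 0
  | VSub a b => fun i => vcoeff a i + (-1) * vcoeff b i
  end.

Lemma veval_lc {V : RVS} (env : list V) e : veval env e = lin_comb_fun (vcoeff e) env.
Proof.
  induction e; simpl.
  - symmetry; apply lin_comb_fun_unit.
  - rewrite lin_comb_fun_add, IHe1, IHe2; auto.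
  - rewrite lin_comb_fun_scal, IHe; auto.
  - symmetry; apply lin_comb_fun_zero.
  - unfold vsub. rewrite lin_comb_fun_add, lin_comb_fun_scal, IHe1, IHe2; auto.
Qed.

Lemma veval_eq {V : RVS} (env : list V) e1 e2 :
  (forall i, (i < length env)%nat -> vcoeff e1 i = vcoeff e2 i) ->
  veval env e1 = veval env e2.
Proof. intros H; rewrite !veval_lc; apply lin_comb_fun_ext; auto. Qed.

Ltac inlist t l :=
  match l with
  | nil => constr:(false)
  | cons t _ => constr:(true)
  | cons _ ?r => inlist t r
  end.

Ltac vcollect t env :=
  match t with
  | vadd ?a ?b => let e1 := vcollect a env in vcollect b e1
  | vsub ?a ?b => let e1 := vcollect a env in vcollect b e1
  | vscal _ ?a => vcollect a env
  | vzero => env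
  | _ => match inlist t env with
         | true => env
         | false => constr:(cons t env)
         end
  end.

Ltac vlookup t l :=
  match l with
  | cons t _ => constr:(O)
  | cons _ ?r => let n := vlookup t r in constr:(S n)
  end.

Ltac vreify t env :=
  match t with
  | vadd ?a ?b => let x := vreify a env in let y := vreify b env in constr:(VAdd x y)
  | vsub ?a ?b => let x := vreify a env in let y := vreify b env in constr:(VSub x y)
  | vscal ?r ?a => let x := vreify a env in constr:(VScal r x)
  | vzero => constr:(VZero)
  | _ => let n := vlookup t env in constr:(VAtom n)
  end.

Ltac index_cases i Hi :=
  lazymatch type of Hi with
  | (_ < 0)%nat => exfalso; exact (Nat.nlt_0_r _ Hi)
  | (_ < S _)%nat =>
      destruct i as [|i]; [clear Hi | apply Nat.succ_lt_mono in Hi; index_cases i Hi]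
  end.

(* Leaves the coefficient equations that [ring]/[field] cannot close,
   typically [field] goals with side conditions. *)
Ltac vring_core :=
  match goal with
  | |- @eq (vcar ?V) ?a ?b =>
    let env0 := vcollect a (@nil (vcar V)) in
    let env := vcollect b env0 in
    let ea := vreify a env in
    let eb := vreify b env in
    change (veval env ea = veval env eb); apply veval_eq;
    let i := fresh "i" in let Hi := fresh "Hi" in
    intros i Hi; cbn [length] in Hi; index_cases i Hi;
    simpl; try solve [ring | field]
  end.

Ltac vring := unfold seg in *; solve [vring_core].


(** * Span and independence *)

Fixpoint span {V : RVS} (l : list V) (v : V) : Prop :=
  match l with
  | nil => v = vzero
  | a :: l' => exists c r, span l' r /\ v = vadd (vscal c a) r
  end.

Fixpoint indep {V : RVS} (l : list V) : Prop :=
  match l with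
  | nil => True
  | a :: l' => indep l' /\ ~ span l' a
  end.

Section Span.
Context {V : RVS}.

Lemma span_zero (l : list V) : span l vzero.
Proof. induction l; simpl; auto. exists 0, vzero; split; auto. vring. Qed.

Lemma span_add (l : list V) u v : span l u -> span l v -> span l (vadd u v).
Proof.
  revert u v; induction l; simpl; intros u v Hu Hv.
  - subst; vring.
  - destruct Hu as [c1 [r1 [H1 ->]]]; destruct Hv as [c2 [r2 [H2 ->]]].
    exists (c1 + c2), (vadd r1 r2); split; auto. vring.
Qed.

Lemma span_scal (l : list V) c v : span l v -> span l (vscal c v).
Proof.
  revert v; induction l; simpl; intros v Hv.
  - subst; vring.
  - destruct Hv as [c1 [r1 [H1 ->]]].
    exists (c * c1), (vscal c r1); split; auto. vring.
Qed.

Lemma span_cons (l : list V) a v : span l v -> span (a :: l) v.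
Proof. intros; exists 0, v; split; auto; vring. Qed.

Lemma span_head (l : list V) a : span (a :: l) a.
Proof. exists 1, vzero; split; [apply span_zero | vring]. Qed.

Lemma span_closed (P : V -> Prop) (l : list V) :
  P vzero -> (forall u v, P u -> P v -> P (vadd u v)) ->
  (forall c u, P u -> P (vscal c u)) -> Forall P l -> forall v, span l v -> P v.
Proof.
  intros H0 HA HS HF; induction HF; simpl; intros v Hv.
  - subst; auto.
  - destruct Hv as [c [r [Hr ->]]]; auto.
Qed.

Lemma span_trans (l1 l2 : list V) :
  Forall (span l2) l1 -> forall v, span l1 v -> span l2 v.
Proof. intros; eapply span_closed; eauto using span_zero, span_add, span_scal. Qed.

Lemma span_app (l1 l2 : list V) v :
  span (l1 ++ l2) v <-> exists v1 v2, span l1 v1 /\ span l2 v2 /\ v = vadd v1 v2.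
Proof.
  revert v; induction l1; simpl; intros v; split.
  - intros H; exists vzero, v; repeat split; auto; vring.
  - intros [v1 [v2 [-> [H ->]]]]; replace (vadd vzero v2) with v2 by vring; auto.
  - intros [c [r [Hr ->]]]. apply IHl1 in Hr. destruct Hr as [v1 [v2 [H1 [H2 ->]]]].
    exists (vadd (vscal c a) v1), v2; repeat split; auto.
    exists c, v1; split; auto. vring.
  - intros [v1 [v2 [[c [r [Hr ->]]] [H2 ->]]]].
    exists c, (vadd r v2); split; [apply IHl1; exists r, v2; auto | vring].
Qed.

Lemma span_lin_comb (l : list V) v :
  span l v <-> exists c, length c = length l /\ v = lin_comb c l.
Proof.
  revert v; induction l as [|a l IH]; simpl; intros v; split.
  - intros ->; exists nil; auto.
  - intros [c [Hc ->]]; destruct c; simpl; auto.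
  - intros [c0 [r [Hr ->]]]. apply IH in Hr; destruct Hr as [c [Hc ->]].
    exists (c0 :: c); simpl; auto.
  - intros [c [Hc ->]]. destruct c as [|c0 c]; simpl in Hc; [discriminate|].
    exists c0, (lin_comb c l); split; auto. apply IH; exists c; auto.
Qed.

Lemma lin_comb_scal (a : R) (c : list R) (l : list V) :
  lin_comb (map (Rmult a) c) l = vscal a (lin_comb c l).
Proof.
  revert l; induction c; destruct l; cbn [map lin_comb]; try vring.
  rewrite IHc. vring.
Qed.

Lemma lin_indep_indep (l : list V) : lin_indep l <-> indep l.
Proof.
  induction l as [|a l IH]; simpl; split.
  - auto.
  - intros _ c Hc _. destruct c; simpl in *; [constructor | discriminate].
  - intros H. split.
    + apply IH. intros c Hc E.
      assert (H' := H (0 :: c) ltac:(simpl; lia) ltac:(simpl; rewrite E; vring)).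
      inversion H'; auto.
    + intros Hs. apply span_lin_comb in Hs. destruct Hs as [c [Hc E]].
      assert (H' := H ((-1) :: c) ltac:(simpl; lia) ltac:(simpl; rewrite <- E; vring)).
      inversion H'; lra.
  - intros [Hi Hs] c Hc E. destruct c as [|c0 c]; simpl in Hc; [discriminate|].
    simpl in E.
    destruct (Req_dec c0 0) as [H0|H0].
    + subst c0. constructor; auto. apply (proj2 IH Hi); [lia|].
      rewrite <- E; vring.
    + exfalso; apply Hs. apply span_lin_comb. exists (map (Rmult (-1/c0)) c).
      split; [rewrite length_map; lia|].
      rewrite lin_comb_scal.
      replace (lin_comb c l) with (vsub (vadd (vscal c0 a) (lin_comb c l)) (vscal c0 a))
        by vring.
      rewrite E. vring_core. field; auto.
Qed.
End Span.

Section Linear.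
Context {V W : RVS} (T : V -> W) (HT : is_linear T).

Lemma linear0 : T vzero = vzero.
Proof. destruct HT as [_ H]. rewrite <- (vscal0l vzero), H. apply vscal0l. Qed.

Lemma linearB x y : T (vsub x y) = vsub (T x) (T y).
Proof. destruct HT as [H1 H2]. unfold vsub; rewrite H1, H2; auto. Qed.

Lemma linear_comb a x y : T (vadd (vscal a x) y) = vadd (vscal a (T x)) (T y).
Proof. destruct HT as [H1 H2]; rewrite H1, H2; auto. Qed.

Lemma linear_line x s y : T (vadd x (vscal s y)) = vadd (T x) (vscal s (T y)).
Proof. destruct HT as [H1 H2]; rewrite H1, H2; auto. Qed.

Lemma linear_seg x y t : T (seg x y t) = seg (T x) (T y) t.
Proof. destruct HT as [H1 H2]; unfold seg; rewrite H1, !H2; auto. Qed.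

Lemma span_map_inv l w : span (map T l) w -> exists v, span l v /\ T v = w.
Proof.
  revert w; induction l; simpl; intros w Hw.
  - subst; exists vzero; split; auto; apply linear0.
  - destruct Hw as [c [r [Hr ->]]]. destruct (IHl r Hr) as [v [Hv <-]].
    exists (vadd (vscal c a) v); split; [exists c, v; auto | apply linear_comb].
Qed.

(* Exchange argument: each new [x] either has image independent of the
   current family [map T gs ++ b], or is corrected by an element of the span
   of the previous [x]'s into a vector whose image lies in [span b]. *)
Lemma indep_split_by_image (b : list W) : indep b ->
  forall xs, indep xs -> exists ys gs,
    indep ys /\ indep (map T gs ++ b) /\
    Forall (fun y => span xs y /\ span b (T y)) ys /\ Forall (span xs) gs /\
    (length ys + length gs = length xs)%nat.
Proof.
  intros Hb; induction xs as [|x0 xs IH]; simpl; intros Hx.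
  - exists nil, nil; simpl; repeat split; auto.
  - destruct Hx as [Hx Hn]. destruct (IH Hx) as [ys [gs [Hy [Hg [Fy [Fg Hl]]]]]].
    assert (Fy' : Forall (fun y => span (x0 :: xs) y /\ span b (T y)) ys).
    { eapply Forall_impl; [|exact Fy]. intros y [H1 H2]; split; auto. apply span_cons; auto. }
    assert (Fg' : Forall (span (x0 :: xs)) gs).
    { eapply Forall_impl; [|exact Fg]. intros y H1; apply span_cons; auto. }
    destruct (classic (span (map T gs ++ b) (T x0))) as [Hs|Hs].
    + apply span_app in Hs. destruct Hs as [w1 [w2 [H1 [H2 E]]]].
      destruct (span_map_inv _ _ H1) as [g [Hgs Eg]].
      assert (Hgx : span xs g) by (eapply span_trans; eauto).
      exists (vsub x0 g :: ys), gs. repeat split; auto.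
      * intros Hsp. apply Hn.
        replace x0 with (vadd (vsub x0 g) g) by vring.
        apply span_add; auto. eapply span_trans; [|exact Hsp].
        eapply Forall_impl; [|exact Fy]. intros y [H _]; auto.
      * constructor; auto. split.
        -- exists 1, (vscal (-1) g); split; [apply span_scal; auto | unfold vsub; vring].
        -- rewrite linearB, E, <- Eg.
           replace (vsub (vadd (T g) w2) (T g)) with w2 by vring. auto.
      * simpl; lia.
    + exists ys, (x0 :: gs). repeat split; auto.
      * constructor; auto. apply span_head.
      * simpl; lia.
Qed.
End Linear.

Lemma indep_R_length (l : list R_RVS) : indep l -> (length l <= 1)%nat.
Proof.
  destruct l as [|a [|b r]]; cbn [length]; try lia.
  intros [[Hr Hb] Ha]. exfalso.
  destruct (Req_dec b 0) as [E|E].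
  - subst b. apply Hb, (span_zero (V := R_RVS)).
  - apply Ha. exists (a / b), vzero. split; [apply (span_zero (V := R_RVS))|].
    assert (K : forall x y : R, y <> 0 -> x = x / y * y + 0) by (intros; field; auto).
    apply K; auto.
Qed.

Section Coordinates.
Variable m : nat.

Definition vanish_from (k : nat) (v : Rn m) : Prop :=
  forall i (H : (i < m)%nat), (k <= i)%nat -> v (exist _ i H) = 0.

Definition coord (k : nat) (v : Rn m) : R_RVS :=
  match lt_dec k m with left H => v (exist _ k H) | right _ => 0 end.

Lemma coord_linear k : is_linear (coord k).
Proof. split; intros; unfold coord; destruct (lt_dec k m); cbn; ring. Qed.

Lemma vanish_from_span k l : Forall (vanish_from k) l -> forall v, span l v -> vanish_from k v.
Proof.
  intros HF; apply span_closed; auto; unfold vanish_from; cbn; intros.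
  - reflexivity.
  - rewrite H, H0; auto; ring.
  - rewrite H; auto; ring.
Qed.

(* Induction on [k]: splitting by the linear form [coord k] leaves at most one
   vector with independent image, the others vanish from [k] on. *)
Lemma indep_vanish_from_length k (l : list (Rn m)) :
  indep l -> Forall (vanish_from k) l -> (length l <= k)%nat.
Proof.
  revert l; induction k; intros l Hl HF.
  - destruct l as [|a l]; simpl; auto. exfalso.
    destruct Hl as [_ Ha]. apply Ha.
    replace a with (@vzero (Rn m)) by
      (inversion HF; subst; apply functional_extensionality; intros [i Hi];
       cbn; symmetry; apply H1; lia).
    apply span_zero.
  - destruct (indep_split_by_image (coord k) (coord_linear k) nil I l Hl)
      as [ys [gs [Hy [Hg [Fy [Fg E]]]]]].
    rewrite app_nil_r in Hg. apply indep_R_length in Hg. rewrite length_map in Hg.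
    assert (length ys <= k)%nat; [|lia].
    apply IHk; auto. eapply Forall_impl; [|exact Fy]. intros y [H1 H2].
    simpl in H2. assert (Zy := vanish_from_span _ _ HF _ H1).
    intros i Hi Hki. destruct (Nat.eq_dec i k).
    + subst i. unfold coord in H2. destruct (lt_dec k m); [|lia].
      rewrite <- H2. repeat f_equal. apply le_unique.
    + apply Zy; lia.
Qed.

Lemma indep_Rn_length (l : list (Rn m)) : indep l -> (length l <= m)%nat.
Proof.
  intros H; apply indep_vanish_from_length; auto.
  apply Forall_forall; intros v _ i Hi Hle; lia.
Qed.
Lemma indep_Rn_extend (l : list (Rn m)) w : indep l -> ~ span l w -> (length l + 1 <= m)%nat.
Proof. intros Hl Hw. assert (H := indep_Rn_length (w :: l) (conj Hl Hw)). cbn [length] in H; lia. Qed.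
End Coordinates.

(** * Two-sided directions and minimal faces *)

Lemma pos_lower_bound a b : 0 < a -> 0 < b -> exists t, 0 < t /\ t <= a /\ t <= b.
Proof.
  intros; exists (Rmin a b).
  split; [apply Rmin_glb_lt; auto | split; [apply Rmin_l | apply Rmin_r]].
Qed.

Lemma abs_bounds c : exists a, 0 <= a /\ - a <= c <= a.
Proof.
  exists (Rabs c); split; [apply Rabs_pos | split; [|apply RRle_abs]].
  assert (Hn := RRle_abs (- c)). rewrite Rabs_Ropp in Hn. lra.
Qed.

Definition two_sided {X : RVS} (C : X -> Prop) (p v : X) : Prop :=
  exists e, 0 < e /\ forall s, -e <= s <= e -> C (vadd p (vscal s v)).

(* The minimal face of [p] in [C]: it is a face (below) and the minimal face
   is contained in it, so the two coincide. *)
Definition dir_face {X : RVS} (C : X -> Prop) (p y : X) : Prop :=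
  C y /\ two_sided C p (vsub y p).

Section TwoSided.
Context {X : RVS} (C : X -> Prop) (HC : convex_set C).

Lemma two_sided0 p : C p -> two_sided C p vzero.
Proof.
  intros Hp; exists 1; split; [lra|]. intros.
  replace (vadd p (vscal s vzero)) with p by vring. auto.
Qed.

Lemma two_sided_scal p c v : two_sided C p v -> two_sided C p (vscal c v).
Proof.
  intros [e [He H]]. destruct (abs_bounds c) as [a [Ha Hc]].
  exists (e / (a + 1)). split; [apply Rdiv_lt_0_compat; lra|].
  assert (K : e / (a + 1) * (a + 1) = e) by (field; lra).
  intros s Hs. replace (vadd p (vscal s (vscal c v))) with (vadd p (vscal (s * c) v)) by vring.
  apply H. split; nra.
Qed.

Lemma two_sided_add p u v : two_sided C p u -> two_sided C p v -> two_sided C p (vadd u v).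
Proof.
  intros [e1 [He1 H1]] [e2 [He2 H2]].
  destruct (pos_lower_bound e1 e2 He1 He2) as [e [He [Hle1 Hle2]]].
  exists (e / 2). split; [lra|]. intros s Hs.
  replace (vadd p (vscal s (vadd u v)))
    with (seg (vadd p (vscal (2 * s) u)) (vadd p (vscal (2 * s) v)) (1 / 2)) by vring.
  apply HC; [apply H1 | apply H2 |]; lra.
Qed.

Lemma two_sided_span p l y :
  C p -> Forall (two_sided C p) l -> span l y -> two_sided C p y.
Proof.
  intros Hp HF; apply (span_closed _ l); auto.
  - apply two_sided0; auto.
  - apply two_sided_add.
  - apply two_sided_scal.
Qed.

(* A two-sided direction at a point [z] of the minimal face of [p] is a
   two-sided direction at [p]: [p] is an interior point of a segment from the
   far side of [p] to points near [z]. *)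
Lemma two_sided_transfer p z w :
  two_sided C p (vsub z p) -> two_sided C z w -> two_sided C p w.
Proof.
  intros [e1 [He1 H1]] [d [Hd H2]].
  set (lam := e1 / (1 + e1)).
  assert (Hl : 0 < lam < 1).
  { unfold lam; split; [apply Rdiv_lt_0_compat; lra|].
    apply (Rmult_lt_reg_r (1 + e1)); [lra|]. field_simplify; lra. }
  exists (lam * d). split; [nra|]. intros s Hs.
  replace (vadd p (vscal s w))
    with (seg (vadd z (vscal (s / lam) w)) (vadd p (vscal (- e1) (vsub z p))) lam)
    by (unfold seg, lam; vring_core; field; lra).
  apply HC; [apply H2 | apply H1 | ]; try lra.
  split; apply (Rmult_le_reg_l lam); try lra; field_simplify; lra.
Qed.

Lemma dir_face_face p : C p -> face (dir_face C p) C.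
Proof.
  intros Hp. split; [|split].
  - intros x y t [Cx Dx] [Cy Dy] Ht. split; [apply HC; auto|].
    replace (vsub (seg x y t) p)
      with (vadd (vscal t (vsub x p)) (vscal (1 - t) (vsub y p))) by vring.
    apply two_sided_add; apply two_sided_scal; auto.
  - intros z [H _]; auto.
  - intros x y Hxy Hs [t0 [Ht0 [Cz Dz]]] t Ht. split; [apply Hs; auto|].
    replace (vsub (seg x y t) p)
      with (vadd (vsub (seg x y t0) p) (vscal (t - t0) (vsub x y))) by vring.
    apply two_sided_add; auto. apply two_sided_scal.
    apply (two_sided_transfer _ (seg x y t0)); auto.
    destruct (pos_lower_bound t0 (1 - t0)) as [e [He [He1 He2]]]; try lra.
    exists (e / 2). split; [lra|]. intros s Hs'.
    replace (vadd (seg x y t0) (vscal s (vsub x y))) with (seg x y (t0 + s)) by vring.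
    apply Hs. lra.
Qed.

Lemma dir_face_center p : C p -> dir_face C p p.
Proof.
  intros Hp; split; auto.
  replace (vsub p p) with (@vzero X) by vring. apply two_sided0; auto.
Qed.

Lemma minface_dir_face p y : C p -> minface p C y -> dir_face C p y.
Proof. intros Hp H; apply H; [apply dir_face_face | apply dir_face_center]; auto. Qed.
End TwoSided.

Section AffineHull.
Context {X : RVS}.

Lemma aff_in (A : X -> Prop) x : A x -> aff A x.
Proof. intros H. exists (x :: nil), (1 :: nil). simpl; repeat split; auto; [ring | vring]. Qed.

Lemma lin_comb_shift (c : list R) (pts : list X) p : length c = length pts ->
  lin_comb c pts =
  vadd (lin_comb c (map (fun y => vsub y p) pts)) (vscal (fold_right Rplus 0 c) p).
Proof.
  revert pts; induction c; destruct pts; simpl; intros H; try discriminate.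
  - vring.
  - rewrite IHc by lia. vring.
Qed.

Lemma aff_closed (P : X -> Prop) (A : X -> Prop) p x :
  P vzero -> (forall u v, P u -> P v -> P (vadd u v)) -> (forall c u, P u -> P (vscal c u)) ->
  (forall y, A y -> P (vsub y p)) -> aff A x -> P (vsub x p).
Proof.
  intros H0 HA HS HP [pts [c [H1 [H2 [H3 ->]]]]].
  rewrite (lin_comb_shift c pts p H1), H3.
  replace (vsub (vadd (lin_comb c (map (fun y : X => vsub y p) pts)) (vscal 1 p)) p)
    with (lin_comb c (map (fun y : X => vsub y p) pts)) by vring.
  clear H1 H3. revert c; induction H2; intros c; destruct c; simpl; auto.
Qed.

Lemma aff_dir_closed (P : X -> Prop) (A : X -> Prop) p v :
  P vzero -> (forall u v, P u -> P v -> P (vadd u v)) -> (forall c u, P u -> P (vscal c u)) ->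
  (forall y, A y -> P (vsub y p)) -> aff_dir A v -> P v.
Proof.
  intros H0 HA HS HP [x [y [Hx [Hy ->]]]].
  replace (vsub x y) with (vadd (vsub x p) (vscal (-1) (vsub y p))) by vring.
  apply HA; [|apply HS]; eapply aff_closed; eauto.
Qed.
End AffineHull.

Section FaceDirections.
Context {X : RVS} (C : X -> Prop) (HC : convex_set C) (p : X) (Hp : C p).

Lemma aff_minface_two_sided x : aff (minface p C) x -> two_sided C p (vsub x p).
Proof.
  apply aff_closed; auto using two_sided0, two_sided_add, two_sided_scal.
  intros y Hy; apply (minface_dir_face C HC p y Hp Hy).
Qed.

Lemma aff_dir_two_sided (A : X -> Prop) v :
  (forall y, A y -> dir_face C p y) -> aff_dir A v -> two_sided C p v.
Proof.
  intros HA. apply aff_dir_closed with (A := A) (p := p);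
    auto using two_sided0, two_sided_add, two_sided_scal.
  intros y Hy; apply HA; auto.
Qed.

(* A face [F] through [p] contains the open segment from [p - e/2 v] to
   [p + e/2 v], in particular [p + e/4 v]; so [v] is a multiple of the
   difference of two points of [F]. *)
Lemma two_sided_aff_dir (F : X -> Prop) v :
  face F C -> F p -> two_sided C p v -> aff_dir F v.
Proof.
  intros [_ [_ HF]] Fp [e [He H]].
  destruct (classic (v = vzero)) as [E|E].
  - subst. exists p, p. repeat split; try apply aff_in; auto. vring.
  - set (x := vadd p (vscal (e/2) v)). set (y := vadd p (vscal (-(e/2)) v)).
    assert (Hxy : x <> y).
    { intros Exy. apply E.
      replace v with (vscal (/ e) (vsub x y)) by (unfold x, y; vring_core; field; lra).
      rewrite Exy. vring. }
    assert (Hseg : forall t, seg x y t = vadd p (vscal (e/2 * (2*t-1)) v))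
      by (intros t; unfold x, y; vring).
    assert (Hin : forall t, 0 < t < 1 -> F (seg x y t)).
    { apply HF; auto.
      - intros t Ht. rewrite Hseg. apply H. split; nra.
      - exists (1/2); split; [lra|]. rewrite Hseg.
        replace (vadd p (vscal (e/2*(2*(1/2)-1)) v)) with p by vring. auto. }
    exists (lin_comb ((1 - 4/e) :: (4/e) :: nil) (p :: seg x y (3/4) :: nil)), p.
    split; [|split].
    + exists (p :: seg x y (3/4) :: nil), ((1 - 4/e) :: (4/e) :: nil).
      split; [reflexivity|]. split; [repeat constructor; auto; apply Hin; lra|].
      split; [simpl; ring | reflexivity].
    + apply aff_in; auto.
    + rewrite Hseg. simpl. vring_core; field; lra.
Qed.
End FaceDirections.

Lemma affdim_two_sided_bound {X : RVS} (S F : X -> Prop) p j :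
  convex_set S -> face F S -> F p -> affdim F j ->
  forall l, indep l -> Forall (two_sided S p) l -> (length l <= j)%nat.
Proof.
  intros HS HF Fp [_ [_ Hmax]] l Hi Hl. apply Hmax; [apply lin_indep_indep; auto|].
  eapply Forall_impl; [|exact Hl]. intros v Hv. eapply two_sided_aff_dir; eauto.
Qed.

Lemma affdim_minface_basis {X : RVS} (C : X -> Prop) p l :
  convex_set C -> C p -> affdim (minface p C) l ->
  exists b, length b = l /\ indep b /\ Forall (two_sided C p) b.
Proof.
  intros HC Hp [_ [[b [Hbl [Hbi HbF]]] _]]. exists b.
  split; [auto | split; [apply lin_indep_indep; auto|]].
  eapply Forall_impl; [|exact HbF]. intros v Hv.
  apply (aff_dir_two_sided C HC p Hp (minface p C)); auto.
  intros y Hy; apply minface_dir_face; auto.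
Qed.

Lemma nat_max (P : nat -> Prop) N : P O -> (forall n, P n -> (n <= N)%nat) ->
  exists n, P n /\ forall n', P n' -> (n' <= n)%nat.
Proof.
  revert P; induction N; intros P H0 HB.
  - exists O; split; [auto|]. intros n' Hn; specialize (HB _ Hn); lia.
  - destruct (classic (P (S N))) as [HS|HS].
    + exists (S N); split; [auto|]. intros n' Hn; apply HB; auto.
    + apply IHN; auto. intros n Hn. assert (HH := HB n Hn).
      destruct (Nat.eq_dec n (S N)); [subst; contradiction | lia].
Qed.

Lemma in_face_dim_le_two_sided {X : RVS} (C : X -> Prop) p (k : Z) :
  convex_set C -> C p ->
  (forall xs, indep xs -> Forall (two_sided C p) xs -> (Z.of_nat (length xs) <= k)%Z) ->
  in_face_dim_le C p k.
Proof.
  intros HC Hp HB.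
  assert (HB' : forall xs, lin_indep xs -> Forall (aff_dir (dir_face C p)) xs ->
                 (Z.of_nat (length xs) <= k)%Z).
  { intros xs Hi HF. apply HB; [apply lin_indep_indep; auto|].
    eapply Forall_impl; [|exact HF]. intros v.
    apply aff_dir_two_sided; auto. }
  set (P := fun n => exists xs, length xs = n /\ lin_indep xs /\ Forall (aff_dir (dir_face C p)) xs).
  assert (P0 : P O) by (exists nil; repeat split; auto; apply lin_indep_indep; exact I).
  assert (Hk := HB' nil ltac:(apply lin_indep_indep; exact I) (Forall_nil _)). simpl in Hk.
  destruct (nat_max P (Z.to_nat k) P0) as [n [[xs [Hl [Hi HF]]] Hmax]].
  { intros n [xs [Hl [Hi HF]]]. assert (H := HB' xs Hi HF). lia. }
  exists (dir_face C p). split; [apply dir_face_face; auto|].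
  split; [apply dir_face_center; auto|]. exists n. split.
  - split; [exists p; apply dir_face_center; auto|]. split; [exists xs; auto|].
    intros l Hi' HF'. apply Hmax. exists l; auto.
  - assert (H := HB' xs Hi HF). lia.
Qed.

(** * The composite problem *)

Lemma ele_Fin a x : ele a (Fin x) -> exists y, a = Fin y /\ y <= x.
Proof. destruct a; simpl; intros H; [eexists; split; eauto | contradiction]. Qed.

Lemma eplus_le a b x y : ele a (Fin x) -> ele b (Fin y) -> ele (eplus a b) (Fin (x + y)).
Proof. destruct a, b; simpl; intros; try contradiction; lra. Qed.

Lemma eplus_inv a b z :
  ele (eplus a b) (Fin z) -> exists x y, a = Fin x /\ b = Fin y /\ x + y <= z.
Proof. destruct a, b; simpl; intros; try contradiction. eauto. Qed.

Lemma lev_convex {X : RVS} (g : X -> ereal) x a :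
  convex_fun g -> g x = Fin a -> convex_set (lev g x).
Proof.
  intros Hg E u v t Hu Hv Ht. unfold lev in *. rewrite E in *.
  destruct (ele_Fin _ _ (Hg u v a a t Ht Hu Hv)) as [y [Ey Hy]].
  rewrite Ey; simpl. nra.
Qed.

Lemma epi_convex {X : RVS} (g : X -> ereal) : convex_fun g -> convex_set (epi g).
Proof. intros Hg z1 z2 t H1 H2 Ht. apply Hg; auto. Qed.

Lemma hypo_shift_convex {X : RVS} (g : X -> ereal) M :
  convex_fun g -> convex_set (hypo_shift M g).
Proof.
  intros Hg z1 z2 t H1 H2 Ht. unfold hypo_shift in *.
  destruct (g (fst z1)) as [y1|] eqn:E1; try contradiction.
  destruct (g (fst z2)) as [y2|] eqn:E2; try contradiction.
  assert (H := Hg (fst z1) (fst z2) y1 y2 t Ht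
                 ltac:(rewrite E1; simpl; lra) ltac:(rewrite E2; simpl; lra)).
  change (match g (seg (fst z1) (fst z2) t) with
          | Fin y => t * snd z1 + (1 - t) * snd z2 <= M - y | PInf => False end).
  destruct (ele_Fin _ _ H) as [y [Ey Hy]]. rewrite Ey. nra.
Qed.

(* The affine hull of the minimal face of [(x, r)] contains a point off the
   horizontal through [(x, r)]; along its direction [C] is crossed with a
   nonzero slope. *)
Lemma oblique_face_slope {X : RVS} (C : prodVS X R_RVS -> Prop) (x : X) (r : R) :
  convex_set C -> C (x, r) -> oblique_face ((x, r) : prodVS X R_RVS) C ->
  exists v c e, c <> 0 /\ 0 < e /\
    forall s, -e <= s <= e -> C ((vadd x (vscal s v), r + s * c) : prodVS X R_RVS).
Proof.
  intros HC Hz Hob. apply not_all_ex_not in Hob. destruct Hob as [w Hw].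
  apply imply_to_and in Hw. destruct Hw as [Hw Hne].
  destruct (aff_minface_two_sided C HC _ Hz w Hw) as [e [He H]].
  destruct w as [w1 w2]; cbn in Hne, H.
  exists (vsub w1 x), (w2 - r), e. split; [|split; [auto|]].
  - intro E; apply Hne. cbn; lra.
  - intros s Hs. specialize (H s Hs).
    replace (r + s * (w2 - r)) with (r + s * (w2 + -1 * r)) by ring. exact H.
Qed.

Lemma small_ratio t e : 0 < e -> 0 < t -> t <= e / (1 + e) -> t < 1 /\ t / (1 - t) <= e.
Proof.
  intros He Ht H. apply (Rmult_le_compat_r (1 + e)) in H; [|lra].
  unfold Rdiv in H; rewrite Rmult_assoc, Rinv_l in H by lra.
  split; [nra|]. apply (Rmult_le_reg_r (1 - t)); [nra|].
  unfold Rdiv; rewrite Rmult_assoc, Rinv_l by nra. nra.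
Qed.

Section Minimizer.
Context {V : RVS} {m : nat} (Rg : V -> ereal) (f : Rn m -> ereal) (Phi : V -> Rn m) (p : V).
Context (HR : convex_fun Rg) (Hf : convex_fun f) (HPhi : is_linear Phi)
        (Hmin : argmin_set Rg f Phi p).
Context (rp F0 : R) (Erp : Rg p = Fin rp) (EF0 : f (Phi p) = Fin F0).

Local Notation D := (two_sided (lev Rg p) p).
Local Notation L := (two_sided (lev f (Phi p)) (Phi p)).
Local Notation S := (argmin_set Rg f Phi).

Lemma lev_Rg_convex : convex_set (lev Rg p).
Proof. exact (lev_convex Rg p rp HR Erp). Qed.

Lemma lev_f_convex : convex_set (lev f (Phi p)).
Proof. exact (lev_convex f (Phi p) F0 Hf EF0). Qed.

Lemma lev_Rg_center : lev Rg p p.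
Proof. unfold lev; rewrite Erp; simpl; lra. Qed.

Lemma lev_f_center : lev f (Phi p) (Phi p).
Proof. unfold lev; rewrite EF0; simpl; lra. Qed.

Lemma argmin_iff u : S u <-> ele (eplus (Rg u) (f (Phi u))) (Fin (rp + F0)).
Proof.
  split.
  - intros H. specialize (H p). rewrite Erp, EF0 in H. exact H.
  - intros H v. assert (Hp := Hmin v). rewrite Erp, EF0 in Hp.
    destruct (Rg u), (f (Phi u)); simpl in H; try contradiction.
    destruct (Rg v), (f (Phi v)); simpl in *; auto. lra.
Qed.

Lemma argmin_convex : convex_set S.
Proof.
  intros u v t Hu Hv Ht. apply argmin_iff in Hu, Hv. apply argmin_iff.
  destruct (eplus_inv _ _ _ Hu) as [a1 [b1 [E1 [E2 H1]]]].
  destruct (eplus_inv _ _ _ Hv) as [a2 [b2 [E3 [E4 H2]]]].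
  assert (HA := HR u v a1 a2 t Ht ltac:(rewrite E1; simpl; lra) ltac:(rewrite E3; simpl; lra)).
  assert (HB := Hf (Phi u) (Phi v) b1 b2 t Ht
                  ltac:(rewrite E2; simpl; lra) ltac:(rewrite E4; simpl; lra)).
  rewrite <- linear_seg in HB by auto.
  destruct (ele_Fin _ _ HA) as [x [Ex Hx]]. destruct (ele_Fin _ _ HB) as [y [Ey Hy]].
  rewrite Ex, Ey; simpl. nra.
Qed.

Lemma two_sided_argmin y : D y -> L (Phi y) -> two_sided S p y.
Proof.
  intros [e1 [He1 H1]] [e2 [He2 H2]].
  destruct (pos_lower_bound e1 e2 He1 He2) as [e [He [Ha Hb]]].
  exists e; split; auto. intros s Hs. apply argmin_iff.
  assert (A := H1 s ltac:(lra)). assert (B := H2 s ltac:(lra)).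
  unfold lev in A, B. rewrite Erp in A. rewrite EF0 in B.
  rewrite linear_line by auto. apply eplus_le; auto.
Qed.

(* [Rg] is convex and bounded by [rp] on a segment centred at [p] where it
   equals [rp]: it is constant there. *)
Lemma Rg_const_two_sided g : D g ->
  exists e, 0 < e /\ forall s, -e <= s <= e -> Rg (vadd p (vscal s g)) = Fin rp.
Proof.
  intros [e [He H]]. exists e; split; auto. intros s Hs.
  assert (A := H s Hs). assert (B := H (-s) ltac:(lra)).
  unfold lev in A, B. rewrite Erp in A, B.
  destruct (ele_Fin _ _ A) as [a [Ea Ha]]. destruct (ele_Fin _ _ B) as [b [Eb Hb]].
  assert (Cv := HR _ _ a b (1/2) ltac:(lra) ltac:(rewrite Ea; simpl; lra)
                  ltac:(rewrite Eb; simpl; lra)).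
  replace (seg (vadd p (vscal s g)) (vadd p (vscal (- s) g)) (1 / 2)) with p in Cv by vring.
  rewrite Erp in Cv. simpl in Cv. rewrite Ea. f_equal. lra.
Qed.

(* If [Phi q - Phi p = Phi g + w], a point of the segment from [q] to
   [p - t/(1-t) g] has image [Phi p + t w]; for small [t] this point has
   [Rg < rp] and [f o Phi <= F0], contradicting minimality. *)
Lemma Rg_lower_not_dir_sum q g w :
  elt (Rg q) (Fin rp) -> D g -> L w -> vsub (Phi q) (Phi p) <> vadd (Phi g) w.
Proof.
  intros Hq [eg [Heg Hg]] [ew [Hew Hw]] E.
  destruct (Rg q) as [rq|] eqn:Eq; [|contradiction]. simpl in Hq.
  assert (0 < eg / (1 + eg)) by (apply Rdiv_lt_0_compat; lra).
  destruct (pos_lower_bound _ _ H Hew) as [t0 [Ht0 [Ht1 Ht2]]].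
  destruct (pos_lower_bound t0 (1/2) Ht0 ltac:(lra)) as [t [Ht [Ht3 Ht4]]].
  destruct (small_ratio t eg Heg Ht ltac:(lra)) as [Ht5 Ht6].
  set (y := vadd p (vscal (- (t / (1 - t))) g)).
  assert (Hy : ele (Rg y) (Fin rp)).
  { assert (A := Hg (- (t / (1 - t)))). unfold lev in A. rewrite Erp in A. apply A.
    assert (0 <= t / (1 - t)) by (apply Rlt_le, Rdiv_lt_0_compat; lra). lra. }
  assert (HA := HR q y rq rp t ltac:(lra) ltac:(rewrite Eq; simpl; lra) Hy).
  assert (Efu : Phi (seg q y t) = vadd (Phi p) (vscal t w)).
  { rewrite linear_seg by auto. unfold y. rewrite linear_line by auto.
    replace (Phi q) with (vadd (vsub (Phi q) (Phi p)) (Phi p)) by vring.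
    rewrite E. unfold seg. vring_core; field; lra. }
  assert (HB := Hw t ltac:(lra)). unfold lev in HB. rewrite EF0, <- Efu in HB.
  assert (Hm := Hmin (seg q y t)). rewrite Erp, EF0 in Hm.
  destruct (ele_Fin _ _ HA) as [a [Ea Ha]]. destruct (ele_Fin _ _ HB) as [b [Eb Hb]].
  rewrite Ea, Eb in Hm. simpl in Hm. nra.
Qed.

Lemma f_lower_not_dir_sum w1 g w :
  elt (f w1) (Fin F0) -> D g -> L w -> vsub w1 (Phi p) <> vadd (Phi g) w.
Proof.
  intros Hq [eg [Heg Hg]] [ew [Hew Hw]] E.
  destruct (f w1) as [y1|] eqn:Eq; [|contradiction]. simpl in Hq.
  assert (0 < ew / (1 + ew)) by (apply Rdiv_lt_0_compat; lra).
  destruct (pos_lower_bound _ _ H Heg) as [t0 [Ht0 [Ht1 Ht2]]].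
  destruct (pos_lower_bound t0 (1/2) Ht0 ltac:(lra)) as [t [Ht [Ht3 Ht4]]].
  destruct (small_ratio t ew Hew Ht ltac:(lra)) as [Ht5 Ht6].
  set (y := vadd (Phi p) (vscal (- (t / (1 - t))) w)).
  assert (Hy : ele (f y) (Fin F0)).
  { assert (A := Hw (- (t / (1 - t)))). unfold lev in A. rewrite EF0 in A. apply A.
    assert (0 <= t / (1 - t)) by (apply Rlt_le, Rdiv_lt_0_compat; lra). lra. }
  assert (HB := Hf w1 y y1 F0 t ltac:(lra) ltac:(rewrite Eq; simpl; lra) Hy).
  assert (Efu : seg w1 y t = Phi (vadd p (vscal t g))).
  { rewrite linear_line by auto. unfold y.
    replace w1 with (vadd (vsub w1 (Phi p)) (Phi p)) by vring.
    rewrite E. unfold seg. vring_core; field; lra. }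
  assert (HA := Hg t ltac:(lra)). unfold lev in HA. rewrite Erp in HA.
  rewrite Efu in HB.
  assert (Hm := Hmin (vadd p (vscal t g))). rewrite Erp, EF0 in Hm.
  destruct (ele_Fin _ _ HA) as [a [Ea Ha]]. destruct (ele_Fin _ _ HB) as [b [Eb Hb]].
  rewrite Ea, Eb in Hm. simpl in Hm. nra.
Qed.

Lemma oblique_epi_slope : oblique_face ((p, rp) : prodVS V R_RVS) (epi Rg) ->
  exists v c e, c <> 0 /\ 0 < e /\
    forall s, -e <= s <= e -> ele (Rg (vadd p (vscal s v))) (Fin (rp + s * c)).
Proof.
  apply (oblique_face_slope (epi Rg) p rp (epi_convex Rg HR)).
  unfold epi; simpl; rewrite Erp; simpl; lra.
Qed.

Lemma oblique_hypo_slope :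
  oblique_face ((Phi p, rp + F0 - F0) : prodVS (Rn m) R_RVS) (hypo_shift (rp + F0) f) ->
  exists w c e, c <> 0 /\ 0 < e /\
    forall s, -e <= s <= e -> ele (f (vadd (Phi p) (vscal s w))) (Fin (F0 - s * c)).
Proof.
  intros Hob. destruct (oblique_face_slope (hypo_shift (rp + F0) f) (Phi p) (rp + F0 - F0)
    (hypo_shift_convex f (rp + F0) Hf)
    ltac:(unfold hypo_shift; simpl; rewrite EF0; lra) Hob) as [w [c [e [Hc [He H]]]]].
  exists w, c, e. split; [auto | split; [auto|]]. intros s Hs.
  specialize (H s Hs). unfold hypo_shift in H. cbn [fst snd] in H.
  destruct (f (vadd (Phi p) (vscal s w))); [simpl; lra | contradiction].
Qed.

Lemma dir_sum_split xs b : indep xs -> Forall D xs -> indep b -> Forall L b ->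
  exists ys gs, (length ys + length gs = length xs)%nat /\ indep ys /\
    indep (map Phi gs ++ b) /\ Forall D ys /\ Forall (two_sided S p) ys /\
    forall w0, span (map Phi gs ++ b) w0 -> exists g w, D g /\ L w /\ w0 = vadd (Phi g) w.
Proof.
  intros Hx HxD Hb HbL.
  assert (HDspan := two_sided_span _ lev_Rg_convex p xs).
  assert (HLspan := two_sided_span _ lev_f_convex (Phi p) b).
  destruct (indep_split_by_image Phi HPhi b Hb xs Hx) as [ys [gs [Hy [Hg [Fy [Fg E]]]]]].
  assert (FyD : Forall D ys).
  { eapply Forall_impl; [|exact Fy]. intros y [H1 _]. apply HDspan; auto. exact lev_Rg_center. }
  exists ys, gs. repeat split; auto.
  - eapply Forall_impl; [|apply Forall_and; [exact FyD | exact Fy]].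
    intros y [H1 [_ H2]]. apply two_sided_argmin; auto. apply HLspan; auto. exact lev_f_center.
  - intros w0 Hw0. apply span_app in Hw0. destruct Hw0 as [v1 [v2 [H1 [H2 ->]]]].
    destruct (span_map_inv Phi HPhi gs v1 H1) as [g [Hgs <-]].
    exists g, v2. split; [|split; [apply HLspan; auto; exact lev_f_center | auto]].
    apply (two_sided_span _ lev_Rg_convex p gs); [exact lev_Rg_center| |exact Hgs].
    eapply Forall_impl; [|exact Fg]. intros; apply HDspan; auto. exact lev_Rg_center.
Qed.

Section ObliqueCombination.
Variables (v : V) (c ev : R) (w' : Rn m) (c' ew alpha : R) (g : V) (w : Rn m).
Hypotheses (Hev : 0 < ev)
  (Hv : forall s, -ev <= s <= ev -> ele (Rg (vadd p (vscal s v))) (Fin (rp + s * c)))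
  (Hc' : c' <> 0) (Hew : 0 < ew)
  (Hw' : forall s, -ew <= s <= ew -> ele (f (vadd (Phi p) (vscal s w'))) (Fin (F0 - s * c')))
  (Hg : D g) (Hw : L w) (Ew' : w' = vadd (vscal alpha (Phi v)) (vadd (Phi g) w)).

(* Near [p], [p + s z] with [z = alpha v + g] is the midpoint of
   [p + 2 s alpha v] and [p + 2 s g], and its image is the midpoint of
   [Phi p + 2 s w'] and [Phi p - 2 s w]: convexity bounds both terms by
   affine functions of [s] with opposite slopes up to [alpha c - c']. *)
Lemma oblique_combination_bounds : exists s0, 0 < s0 /\
  forall s, -s0 <= s <= s0 -> exists x y,
    Rg (vadd p (vscal s (vadd (vscal alpha v) g))) = Fin x /\
    f (Phi (vadd p (vscal s (vadd (vscal alpha v) g)))) = Fin y /\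
    x <= rp + s * alpha * c /\ y <= F0 - s * c' /\ rp + F0 <= x + y.
Proof.
  destruct (Rg_const_two_sided g Hg) as [eg [Heg Hgc]].
  destruct Hw as [ewl [Hewl Hwl]].
  destruct (abs_bounds alpha) as [a [Ha Ha']].
  set (K := ev / (2 * (a + 1))).
  assert (HK : K * (2 * (a + 1)) = ev) by (unfold K; field; lra).
  assert (HK0 : 0 < K) by (unfold K; apply Rdiv_lt_0_compat; lra).
  destruct (pos_lower_bound K (eg/2) HK0 ltac:(lra)) as [s1 [Hs1 [Hs1a Hs1b]]].
  destruct (pos_lower_bound s1 (ew/2) Hs1 ltac:(lra)) as [s2 [Hs2 [Hs2a Hs2b]]].
  destruct (pos_lower_bound s2 (ewl/2) Hs2 ltac:(lra)) as [s0 [Hs0 [Hs0a Hs0b]]].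
  exists s0; split; auto. intros s Hs.
  set (z := vadd (vscal alpha v) g).
  assert (B1 : -ev <= 2 * s * alpha <= ev).
  { assert (0 <= (K - s) * (a + alpha)) by (apply Rmult_le_pos; lra).
    assert (0 <= (K + s) * (a - alpha)) by (apply Rmult_le_pos; lra).
    assert (0 <= (K - s) * (a - alpha)) by (apply Rmult_le_pos; lra).
    assert (0 <= (K + s) * (a + alpha)) by (apply Rmult_le_pos; lra).
    split; nra. }
  assert (HA := HR _ (vadd p (vscal (2 * s) g)) _ rp (1/2) ltac:(lra) (Hv _ B1)
                  ltac:(rewrite Hgc by lra; simpl; lra)).
  replace (seg (vadd p (vscal (2 * s * alpha) v)) (vadd p (vscal (2 * s) g)) (1 / 2))
    with (vadd p (vscal s z)) in HA by (unfold z; vring).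
  assert (A4 := Hwl (- (2 * s)) ltac:(lra)). unfold lev in A4. rewrite EF0 in A4.
  assert (HB := Hf _ _ _ _ (1/2) ltac:(lra) (Hw' (2 * s) ltac:(lra)) A4).
  replace (seg (vadd (Phi p) (vscal (2 * s) w')) (vadd (Phi p) (vscal (- (2 * s)) w)) (1 / 2))
    with (Phi (vadd p (vscal s z))) in HB
    by (unfold z; rewrite linear_line, (linear_comb _ HPhi), Ew' by auto; vring).
  destruct (ele_Fin _ _ HA) as [x [Ex Hx]]. destruct (ele_Fin _ _ HB) as [y [Ey Hy]].
  exists x, y. repeat split; auto; try lra.
  assert (Hm := Hmin (vadd p (vscal s z))). rewrite Erp, EF0, Ex, Ey in Hm. exact Hm.
Qed.

(* Both bounds are tight on a neighbourhood of [s = 0], which forces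
   [alpha c = c']; then [Rg] has slope [c' <> 0] along [z], so [z] is not in [D]. *)
Lemma oblique_combination :
  two_sided S p (vadd (vscal alpha v) g) /\ ~ D (vadd (vscal alpha v) g).
Proof.
  destruct oblique_combination_bounds as [s0 [Hs0 Key]].
  assert (Eq : alpha * c = c').
  { destruct (Key s0 ltac:(lra)) as [x1 [y1 [_ [_ [H1 [H2 H3]]]]]].
    destruct (Key (- s0) ltac:(lra)) as [x2 [y2 [_ [_ [H4 [H5 H6]]]]]].
    assert (0 <= s0 * (alpha * c - c')) by nra.
    assert (0 <= - s0 * (alpha * c - c')) by nra.
    nra. }
  split.
  - exists s0; split; auto. intros s Hs. apply argmin_iff.
    destruct (Key s Hs) as [x [y [Ex [Ey [H1 [H2 H3]]]]]]. rewrite Ex, Ey. simpl. nra.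
  - intros Hz. destruct (Rg_const_two_sided _ Hz) as [e3 [He3 Hz3]].
    destruct (pos_lower_bound s0 e3 Hs0 He3) as [s [Hs [Hsa Hsb]]].
    destruct (Key s ltac:(lra)) as [x [y [Ex [Ey [H1 [H2 H3]]]]]].
    rewrite Hz3 in Ex by lra. injection Ex; intros <-.
    assert (s * c' = 0) by nra.
    apply Rmult_integral in H. destruct H; lra.
Qed.
End ObliqueCombination.

Section Counting.
Variables (xs : list V) (b : list (Rn m)) (j : nat).
Hypotheses (Hx : indep xs) (HxD : Forall D xs) (Hb : indep b) (HbL : Forall L b)
  (Hj : forall l, indep l -> Forall (two_sided S p) l -> (length l <= j)%nat).

Lemma dim_bound : (length xs + length b <= m + j)%nat.
Proof.
  destruct (dir_sum_split xs b Hx HxD Hb HbL) as [ys [gs [Elen [Hys [Hgb [_ [FyS _]]]]]]].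
  assert (Bm := indep_Rn_length m _ Hgb). rewrite length_app, length_map in Bm.
  assert (Bj := Hj ys Hys FyS). lia.
Qed.

Lemma dim_bound_above_inf :
  above_inf Rg p \/ above_inf f (Phi p) -> (length xs + length b + 1 <= m + j)%nat.
Proof.
  intros Hinf.
  destruct (dir_sum_split xs b Hx HxD Hb HbL)
    as [ys [gs [Elen [Hys [Hgb [_ [FyS Hspan]]]]]]].
  assert (Bj := Hj ys Hys FyS).
  assert (length gs + length b + 1 <= m)%nat; [|lia].
  rewrite <- (length_map Phi gs), <- length_app.
  destruct Hinf as [[q Hq] | [w1 Hw1]]; rewrite ?Erp, ?EF0 in *.
  - apply (indep_Rn_extend m _ (vsub (Phi q) (Phi p)) Hgb). intros Hs.
    destruct (Hspan _ Hs) as [g [w [Hg [Hw E]]]].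
    exact (Rg_lower_not_dir_sum q g w Hq Hg Hw E).
  - apply (indep_Rn_extend m _ (vsub w1 (Phi p)) Hgb). intros Hs.
    destruct (Hspan _ Hs) as [g [w [Hg [Hw E]]]].
    exact (f_lower_not_dir_sum w1 g w Hw1 Hg Hw E).
Qed.

(* The descent direction [v] of [Rg] has image outside [Phi D + L]; the
   descent direction [w'] of [f] lies outside [Phi D + L + R Phi v] unless it
   yields a direction of [S] not in [D] (oblique_combination). *)
Lemma dim_bound_double_oblique :
  double_oblique Rg f Phi p -> (length xs + length b + 2 <= m + j)%nat.
Proof.
  unfold double_oblique. rewrite Erp, EF0. cbv zeta. cbn [real_of eplus].
  intros [HoR Hof].
  destruct (dir_sum_split xs b Hx HxD Hb HbL)
    as [ys [gs [Elen [Hys [Hgb [FyD [FyS Hspan]]]]]]].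
  assert (Bj := Hj ys Hys FyS).
  rewrite <- (length_map Phi gs) in Elen.
  destruct (oblique_epi_slope HoR) as [v [c [ev [Hc [Hev Hv]]]]].
  destruct (oblique_hypo_slope Hof) as [w' [c' [ew [Hc' [Hew Hw']]]]].
  assert (HPv : ~ span (map Phi gs ++ b) (Phi v)).
  { intros Hs. destruct (Hspan _ Hs) as [g [w [Hg [Hw E]]]].
    assert (Hs' : exists s, s * c < 0 /\ -ev <= s <= ev)
      by (destruct (Rlt_dec 0 c); [exists (- ev) | exists ev]; split; nra).
    destruct Hs' as [s [Hsc Hsr]].
    apply (Rg_lower_not_dir_sum (vadd p (vscal s v)) (vscal s g) (vscal s w)).
    - destruct (ele_Fin _ _ (Hv s Hsr)) as [rq [-> Hrq]]. simpl; lra.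
    - apply two_sided_scal; auto.
    - apply two_sided_scal; auto.
    - rewrite linear_line, (proj2 HPhi), E by auto. vring. }
  assert (Bv := indep_Rn_extend m _ _ Hgb HPv). rewrite length_app in Bv.
  destruct (classic (span (Phi v :: map Phi gs ++ b) w')) as [[a [h [Hh ->]]]|Hs].
  - destruct (Hspan _ Hh) as [g [w [Hg [Hw ->]]]].
    destruct (oblique_combination v c ev _ c' ew a g w Hev Hv Hc' Hew Hw' Hg Hw eq_refl)
      as [HzS HzD].
    assert (Hz : indep (vadd (vscal a v) g :: ys)).
    { split; auto. intros Hs. apply HzD.
      apply (two_sided_span _ lev_Rg_convex p ys); auto. exact lev_Rg_center. }
    assert (Bz := Hj _ Hz ltac:(constructor; auto)). simpl in Bz. lia.
  - assert (Bw := indep_Rn_extend m _ _ (conj Hgb HPv : indep (Phi v :: _)) Hs).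
    cbn [length] in Bw. rewrite length_app in Bw. lia.
Qed.
End Counting.
End Minimizer.

Theorem theorem1 (V : RVS) (m : nat) (Rg : V -> ereal) (f : Rn m -> ereal)
  (Phi : V -> Rn m) (p : V) (l : nat) :
  convex_fun Rg -> convex_fun f ->
  is_linear Phi -> (forall w : Rn m, exists u : V, Phi u = w) ->
  argmin_set Rg f Phi p ->
  eplus (Rg p) (f (Phi p)) <> PInf ->
  linearly_closed (lev Rg p) -> contains_no_line (lev Rg p) ->
  affdim (minface (Phi p) (lev f (Phi p))) l ->
  forall (j : nat) (F : V -> Prop),
    face F (argmin_set Rg f Phi) -> F p -> affdim F j ->
    ((above_inf Rg p \/ above_inf f (Phi p)) ->
       in_face_dim_le (lev Rg p) p (Z.of_nat m - Z.of_nat l + Z.of_nat j - 1)%Z) /\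
    (~ (above_inf Rg p \/ above_inf f (Phi p)) ->
       in_face_dim_le (lev Rg p) p (Z.of_nat m - Z.of_nat l + Z.of_nat j)%Z) /\
    (double_oblique Rg f Phi p ->
       in_face_dim_le (lev Rg p) p (Z.of_nat m - Z.of_nat l + Z.of_nat j - 2)%Z).
Proof.
  intros HR Hf HPhi _ Hmin Hfin _ _ Hl j F HF Fp HFj.
  destruct (Rg p) as [rp|] eqn:Erp; [|now destruct Hfin].
  destruct (f (Phi p)) as [F0|] eqn:EF0; [|now destruct Hfin].
  destruct (affdim_minface_basis _ _ _ (lev_f_convex f Phi p Hf F0 EF0)
              (lev_f_center f Phi p F0 EF0) Hl) as [b [<- [Hb HbL]]].
  assert (Hj := affdim_two_sided_bound _ _ _ _
                  (argmin_convex Rg f Phi p HR Hf HPhi Hmin rp F0 Erp EF0) HF Fp HFj).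
  assert (Hface := fun k => in_face_dim_le_two_sided (lev Rg p) p k
                     (lev_Rg_convex Rg p HR rp Erp) (lev_Rg_center Rg p rp Erp)).
  split; [|split]; intros Hcase; apply Hface; intros xs Hx HxD.
  - enough (length xs + length b + 1 <= m + j)%nat by lia.
    eapply dim_bound_above_inf; eauto.
  - enough (length xs + length b <= m + j)%nat by lia.
    eapply dim_bound; eauto.
  - enough (length xs + length b + 2 <= m + j)%nat by lia.
    eapply dim_bound_double_oblique; eauto.
Qed.
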